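(* Let $n=p^{\alpha}q^{\beta}$ where $p,q$ are distinct primes and $\alpha,\beta\geq 1$ are integers. Then $\mathbb{AG}(\mathbb{Z}_n)$ has no induced cycle of odd length greater than $3$.
   Context: For a commutative ring $R$ with unity, the annihilating-ideal graph $\mathbb{AG}(R)$ is the simple graph whose vertex set is the set of all non-zero ideals of $R$ with non-zero annihilator, two distinct vertices $I,J$ being adjacent if and only if $IJ=0$. An induced cycle is an induced subgraph isomorphic to a cycle. *)

From mathcomp Require Import all_boot all_order all_algebra.
Set Implicit Arguments. Unset Strict Implicit. Unset Printing Implicit Defensive.
Import GRing.Theory.
Local Open Scope ring_scope.

Definition is_ideal (R : finComNzRingType) (I : {set R}) : bool :=
  [&& (0 : R) \in I,
      [forall x in I, forall y in I, x + y \in I] &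
      [forall r : R, forall x in I, r * x \in I]].

Definition nonzero_ann (R : finComNzRingType) (I : {set R}) : bool :=
  [exists r : R, (r != 0) && [forall x in I, r * x == 0]].

Definition AG_vertex (R : finComNzRingType) (I : {set R}) : bool :=
  [&& is_ideal I, I != [set 0 : R] & nonzero_ann I].

(* adjacency: I <> J and IJ = 0, i.e. every product x*y (x in I, y in J) is 0
   (IJ is the ideal generated by such products) *)
Definition AG_adj (R : finComNzRingType) (I J : {set R}) : bool :=
  (I != J) && [forall x in I, forall y in J, x * y == 0].

Definition AG_induced_cycle (R : finComNzRingType) (k : nat)
    (f : 'I_k -> {set R}) : Prop :=
  [/\ (3 <= k)%N, injective f, (forall i, AG_vertex (f i)) &
      forall i j : 'I_k,
        AG_adj (f i) (f j) = (((i.+1 %% k)%N == j) || ((j.+1 %% k)%N == i))].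

From mathcomp Require Import all_boot all_order all_algebra.
From mathcomp Require Import zify.
Import GRing.Theory.

Set Implicit Arguments.
Unset Strict Implicit.
Unset Printing Implicit Defensive.

(* In Z_(p^a q^b), xy = 0 iff p^a | xy and q^b | xy. For a fixed prime power
   p^a, the relation "p^a divides every product xy with x in X, y in Y" obeys a
   bridge law: if X ~ Y, Z ~ W and not Y ~ Z then X ~ W, since in p-adic
   valuations v x + v y >= a, v z + v w >= a and v y + v z < a give
   v x + v w > a. Along an induced cycle v_0, v_1, ... consecutive vertices are
   related for both primes while v_m and v_(m+2) fail for at least one of them;
   the bridge laws then force "v_m ~_p v_(m+2)" to flip at every step, which is
   impossible around a cycle of odd length. *)

Lemma pfactor_dvdn_mul_bridge p a s u v t : prime p ->
  p ^ a %| s * u -> p ^ a %| v * t -> ~~ (p ^ a %| u * v) -> p ^ a %| s * t.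
Proof.
move=> p_pr su vt; have [->|s_gt0] := posnP s; first by rewrite dvdn0.
have [->|t_gt0] := posnP t; first by rewrite muln0 dvdn0.
have [->|u_gt0] := posnP u; first by rewrite dvdn0.
have [->|v_gt0] := posnP v; first by rewrite muln0 dvdn0.
move: su vt; rewrite !pfactor_dvdn ?muln_gt0 ?s_gt0 ?t_gt0 ?u_gt0 ?v_gt0 //.
by rewrite !lognM //; lia.
Qed.

Lemma Zp_mul_eq0 n (x y : 'Z_n) : 1 < n -> (x * y == 0)%R = (n %| x * y).
Proof.
by move=> n_gt1; rewrite -[x in LHS]natr_Zp -[y in LHS]natr_Zp -natrM -val_eqE /= val_Zp_nat.
Qed.

Definition set_mul_eq0 (R : finPzSemiRingType) (X Y : {set R}) : bool :=
  [forall x in X, forall y in Y, x * y == 0]%R.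

Definition set_mul_dvd m d (X Y : {set 'I_m}) : bool :=
  [forall x in X, forall y in Y, d %| x * y].

Lemma set_mul_dvdC m d : symmetric (@set_mul_dvd m d).
Proof.
move=> X Y; apply/forall_inP/forall_inP => XY y yY; apply/forall_inP => x xX;
  by rewrite mulnC (forall_inP (XY x xX)).
Qed.

Lemma set_mul_pfactor_bridge m p a (X Y Z W : {set 'I_m}) : prime p ->
  set_mul_dvd (p ^ a) X Y -> set_mul_dvd (p ^ a) Z W ->
  ~~ set_mul_dvd (p ^ a) Y Z -> set_mul_dvd (p ^ a) X W.
Proof.
move=> p_pr XY ZW /forall_inPn[u uY /forall_inPn[v vZ uv]].
apply/forall_inP => s sX; apply/forall_inP => t tW.
apply: (pfactor_dvdn_mul_bridge p_pr _ _ uv).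
  exact: (forall_inP (forall_inP XY s sX)).
exact: (forall_inP (forall_inP ZW v vZ)).
Qed.

Lemma set_mul_eq0_Zp_coprime d1 d2 (X Y : {set 'Z_(d1 * d2)}) :
  1 < d1 * d2 -> coprime d1 d2 ->
  set_mul_eq0 X Y = set_mul_dvd d1 X Y && set_mul_dvd d2 X Y.
Proof.
move=> d_gt1 d12; apply/forall_inP/andP => [XY | [XY1 XY2]].
  by split; apply/forall_inP => x xX; apply/forall_inP => y yY;
    have := forall_inP (XY x xX) y yY;
    rewrite Zp_mul_eq0 // Gauss_dvd // => /andP[].
move=> x xX; apply/forall_inP => y yY.
by rewrite Zp_mul_eq0 // Gauss_dvd // (forall_inP (forall_inP XY1 x xX) y yY)
  (forall_inP (forall_inP XY2 x xX) y yY).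
Qed.

Section BridgedCycle.

Variables (T : Type) (P Q : rel T).
Hypotheses (P_sym : symmetric P) (Q_sym : symmetric Q).
Hypothesis P_bridge : forall x y z w, P x y -> P z w -> ~~ P y z -> P x w.
Hypothesis Q_bridge : forall x y z w, Q x y -> Q z w -> ~~ Q y z -> Q x w.

Variable v : nat -> T.
Hypothesis v_edge : forall m, P (v m) (v m.+1) && Q (v m) (v m.+1).
Hypothesis v_chord : forall m, ~~ (P (v m) (v m.+2) && Q (v m) (v m.+2)).

Lemma chordP_alternates m : P (v m.+1) (v m.+3) = ~~ P (v m) (v m.+2).
Proof.
have /andP[Pm Qm] := v_edge m; have /andP[Pm2 Qm2] := v_edge m.+2.
rewrite P_sym in Pm; rewrite Q_sym in Qm.
case Pm_chord: (P (v m) (v m.+2)) => /=.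
  apply: contraNF (v_chord m.+1) => Pm1_chord; rewrite Pm1_chord.
  by apply: Q_bridge Qm Qm2 _; have := v_chord m; rewrite Pm_chord.
by apply: P_bridge Pm Pm2 _; rewrite Pm_chord.
Qed.

Lemma chordP_odd m : P (v m) (v m.+2) = P (v 0) (v 2) (+) odd m.
Proof.
by elim: m => [|m IHm]; rewrite ?addbF // chordP_alternates IHm addbN.
Qed.

Lemma bridged_cycle_even k : (forall m, v (m + k) = v m) -> ~~ odd k.
Proof.
move=> v_per; have := chordP_odd k.
by rewrite -[v k]/(v (0 + k)) -[k.+2]/(2 + k) !v_per; case: (P _ _); case: (odd k).
Qed.

End BridgedCycle.

Section InducedCycle.

Variables (R : finComNzRingType) (k : nat) (f : 'I_k.+1 -> {set R}).
Hypothesis f_cycle : AG_induced_cycle f.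

Definition cycle_vertex m := f (inZp m).

Lemma cycle_vertex_periodic m : cycle_vertex (m + k.+1) = cycle_vertex m.
Proof. by rewrite /cycle_vertex; congr f; apply: val_inj; rewrite /= modnDr. Qed.

Lemma cycle_vertex_adj i j :
  AG_adj (cycle_vertex i) (cycle_vertex j) =
  (i.+1 == j %[mod k.+1]) || (j.+1 == i %[mod k.+1]).
Proof.
by case: f_cycle => _ _ _ f_adj; rewrite f_adj /= -!(addn1 (_ %% _)) !modnDml !addn1.
Qed.

Lemma cycle_edge_mul_eq0 m : set_mul_eq0 (cycle_vertex m) (cycle_vertex m.+1).
Proof. by move: (cycle_vertex_adj m m.+1); rewrite eqxx => /andP[]. Qed.

Lemma cycle_chord_mul_neq0 m : 3 < k.+1 ->
  ~~ set_mul_eq0 (cycle_vertex m) (cycle_vertex m.+2).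
Proof.
move=> k_gt3; case: f_cycle => _ f_inj _ _.
have mod_neq i j : i < k.+1 -> j < k.+1 -> i != j ->
    (m + i == m + j %[mod k.+1]) = false.
  by move=> ik jk ij; rewrite eqn_modDl !modn_small // (negbTE ij).
have vertex_neq : cycle_vertex m != cycle_vertex m.+2.
  apply/eqP => /f_inj /(congr1 val) /= /eqP.
  by rewrite -[m.+2]addn2 -{1}[m]addn0 mod_neq //; lia.
rewrite /set_mul_eq0; have := cycle_vertex_adj m m.+2.
rewrite /AG_adj vertex_neq /= => ->.
by rewrite -[m.+3]addn3 -[m.+2]addn2 -[m.+1]addn1 -{4}[m]addn0 !mod_neq //; lia.
Qed.

End InducedCycle.

Theorem lemma6 (p q alpha beta : nat) :
  prime p -> prime q -> p != q -> (0 < alpha)%N -> (0 < beta)%N ->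
  forall k : nat, odd k -> (3 < k)%N ->
  ~ exists f : 'I_k -> {set 'Z_(p ^ alpha * q ^ beta)}, AG_induced_cycle f.
Proof.
move=> p_pr q_pr p_neq_q alpha_gt0 beta_gt0 [//|k] k_odd k_gt3 [f f_cycle].
have n_gt1 : 1 < p ^ alpha * q ^ beta.
  have p_pow_gt1 : 1 < p ^ alpha by rewrite -(expn0 p) ltn_exp2l ?prime_gt1.
  by rewrite (leq_trans p_pow_gt1) ?leq_pmulr ?expn_gt0 ?prime_gt0.
have pq_coprime : coprime (p ^ alpha) (q ^ beta).
  by rewrite coprimeXl ?coprimeXr // prime_coprime // dvdn_prime2.
pose P : rel {set 'Z_(p ^ alpha * q ^ beta)} := set_mul_dvd (p ^ alpha).
pose Q : rel {set 'Z_(p ^ alpha * q ^ beta)} := set_mul_dvd (q ^ beta).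
have mul_eq0E X Y : set_mul_eq0 X Y = P X Y && Q X Y.
  exact: set_mul_eq0_Zp_coprime.
apply/negP: k_odd; apply: (@bridged_cycle_even _ P Q _ _ _ _ (cycle_vertex f)).
- exact: set_mul_dvdC.
- exact: set_mul_dvdC.
- by move=> X Y Z W; apply: set_mul_pfactor_bridge.
- by move=> X Y Z W; apply: set_mul_pfactor_bridge.
- by move=> m; rewrite -mul_eq0E cycle_edge_mul_eq0.
- by move=> m; rewrite -mul_eq0E cycle_chord_mul_neq0.
- exact: cycle_vertex_periodic.
Qed.
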